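(* Let $(A,\cdot)$ be a nearly associative algebra over a field $\mathbb{K}$ of characteristic $0$. Then $(A,\cdot)$ is Lie-admissible, i.e. $(A,[\cdot,\cdot])$ with $[x,y]=x\cdot y-y\cdot x$ is a Lie algebra.
   Context: An algebra $(A,\cdot)$ is a linear space $A$ over $\mathbb{K}$ with a bilinear product $\cdot:A\times A\to A$. It is called nearly associative if $x\cdot(y\cdot z)=(z\cdot x)\cdot y$ for all $x,y,z\in A$. An algebra is Lie-admissible if the commutator bracket $[x,y]=x\cdot y-y\cdot x$ makes $A$ a Lie algebra. *)

From HB Require Import structures.
From mathcomp Require Import all_boot all_order all_algebra.
Set Implicit Arguments. Unset Strict Implicit. Unset Printing Implicit Defensive.
Import GRing.Theory.
Local Open Scope ring_scope.

Definition bilinear_prod (K : fieldType) (A : lmodType K) (m : A -> A -> A) : Prop :=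
  (forall (a : K) (x y z : A), m (a *: x + y) z = a *: m x z + m y z) /\
  (forall (a : K) (x y z : A), m x (a *: y + z) = a *: m x y + m x z).

Definition nearly_associative (K : fieldType) (A : lmodType K) (m : A -> A -> A) : Prop :=
  forall x y z : A, m x (m y z) = m (m z x) y.

Definition commutator (K : fieldType) (A : lmodType K) (m : A -> A -> A) : A -> A -> A :=
  fun x y => m x y - m y x.

Definition is_lie_algebra (K : fieldType) (A : lmodType K) (br : A -> A -> A) : Prop :=
  [/\ bilinear_prod br,
      (forall x : A, br x x = 0) &
      (forall x y z : A, br x (br y z) + br y (br z x) + br z (br x y) = 0)].

Definition lie_admissible (K : fieldType) (A : lmodType K) (m : A -> A -> A) : Prop :=
  is_lie_algebra (commutator m).

(* Writing [D x y z := x(yz) - (xy)z], the Jacobiator of the commutator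
   bracket of any algebra is the alternating sum of [D] over the six orderings
   of [x, y, z], i.e. the difference of two cyclic sums of [D].  Near
   associativity turns [D x y z] into [(zx)y - (xy)z], so each cyclic sum of
   [D] telescopes to zero. *)

From mathcomp Require Import all_boot all_order all_algebra.
From mathcomp Require Import ssrAC.
Import GRing.Theory.
Local Open Scope ring_scope.

Section BilinearProduct.

Variables (K : fieldType) (A : lmodType K) (m : A -> A -> A).

Definition cyclic_sum (f : A -> A -> A -> A) (x y z : A) : A :=
  f x y z + f y z x + f z x y.

Definition assoc_defect (x y z : A) : A := m x (m y z) - m (m x y) z.

Hypothesis m_bilinear : bilinear_prod m.

Lemma bilinear_prodBl (x y z : A) : m (x - y) z = m x z - m y z.
Proof. by rewrite addrC -scaleN1r m_bilinear.1 scaleN1r addrC. Qed.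

Lemma bilinear_prodBr (x y z : A) : m x (y - z) = m x y - m x z.
Proof. by rewrite addrC -scaleN1r m_bilinear.2 scaleN1r addrC. Qed.

Lemma bilinear_prod_commutator : bilinear_prod (commutator m).
Proof.
have [mZDl mZDr] := m_bilinear.
by split=> a x y z; rewrite /commutator mZDl mZDr scalerBr opprD addrACA.
Qed.

Lemma commutator_jacobiE (x y z : A) :
  commutator m x (commutator m y z) + commutator m y (commutator m z x)
    + commutator m z (commutator m x y) =
  cyclic_sum assoc_defect x y z - cyclic_sum assoc_defect x z y.
Proof.
rewrite /commutator /cyclic_sum /assoc_defect /=.
rewrite !(bilinear_prodBl, bilinear_prodBr) !(opprB, opprD, addrA).
by rewrite [LHS](ACl (1*12*5*4*9*8*7*2*3*10*11*6)%AC).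
Qed.

Hypothesis m_near_assoc : nearly_associative m.

Lemma near_assoc_cyclic_sum_defect (x y z : A) :
  cyclic_sum assoc_defect x y z = 0.
Proof.
by rewrite /cyclic_sum /assoc_defect !m_near_assoc !addrA !subrK subrr.
Qed.

Lemma near_assoc_commutator_jacobi (x y z : A) :
  commutator m x (commutator m y z) + commutator m y (commutator m z x)
    + commutator m z (commutator m x y) = 0.
Proof. by rewrite commutator_jacobiE !near_assoc_cyclic_sum_defect subrr. Qed.

End BilinearProduct.

Theorem mainTheorem1 (K : fieldType) (A : lmodType K) (m : A -> A -> A) :
  [pchar K] =i pred0 ->
  bilinear_prod m ->
  nearly_associative m ->
  lie_admissible m.
Proof.
move=> _ m_bilinear m_near_assoc; split.
- exact: bilinear_prod_commutator.
- by move=> x; rewrite /commutator subrr.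
- exact: near_assoc_commutator_jacobi.
Qed.
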